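(* Let $n\ge1$, let $\|\cdot\|$ be a norm on $\mathbb R^n$, and let $H=(h_1,\dots,h_n)$ be a continuous map from an open set of $\mathbb R^{4n+1}$ to $\mathbb R^n$, written $H(t;\zeta^0,\zeta^1;\xi^0,\xi^1)$ with $t\in\mathbb R$, $\zeta^0,\zeta^1,\xi^0,\xi^1\in\mathbb R^n$. Assume $P=(p_1,\dots,p_n)$ satisfies $P=H(0;\mathbf 0,\mathbf 0;P,P)$ and $|p_1|\le1$. Let $\mathcal P=(0;\mathbf0,\mathbf0;P,P)$ and, for $\varepsilon>0$, $$N_\varepsilon(\mathcal P)=\{(t;\zeta^0,\zeta^1;\xi^0,\xi^1):|t|+\|\zeta^0\|+\|\zeta^1\|+\|\xi^0-P\|+\|\xi^1-P\|\le\varepsilon\},$$ and suppose $N_\varepsilon(\mathcal P)$ lies in the domain of $H$ and: (i) there is $\Lambda>0$ with $\|H(\bar t;\zeta^0,\zeta^1;\xi^0,\xi^1)-H(t;\zeta^0,\zeta^1;\xi^0,\xi^1)\|\le\Lambda|\bar t-t|$ whenever both points are in $N_\varepsilon(\mathcal P)$; (ii) there are $L_0,L_1>0$ with $\|H(t;\bar\zeta^0,\bar\zeta^1;\xi^0,\xi^1)-H(t;\zeta^0,\zeta^1;\xi^0,\xi^1)\|\le L_0\|\bar\zeta^0-\zeta^0\|+L_1\|\bar\zeta^1-\zeta^1\|$ whenever both points are in $N_\varepsilon(\mathcal P)$; (iii) there are $C_0,C_1\ge0$ with $C_0+C_1<1$ and $\|H(t;\zeta^0,\zeta^1;\bar\xi^0,\bar\xi^1)-H(t;\zeta^0,\zeta^1;\xi^0,\xi^1)\|\le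 C_0\|\bar\xi^0-\xi^0\|+C_1\|\bar\xi^1-\xi^1\|$ whenever both points are in $N_\varepsilon(\mathcal P)$; (iv) $|h_1(X)|\le1$ for all $X\in N_\varepsilon(\mathcal P)$. Then there exist $\delta>0$ and $Z=(z_1,\dots,z_n)\in C^1([-\delta,\delta];\mathbb R^n)$ with $|z_1(t)|\le|t|$ and $(t;Z(t),Z(z_1(t));Z'(t),Z'(z_1(t)))\in N_\varepsilon(\mathcal P)$ for $|t|\le\delta$, such that $$Z'(t)=H\big(t;Z(t),Z(z_1(t));Z'(t),Z'(z_1(t))\big)\ \ (|t|\le\delta),\qquad Z(0)=0,\qquad Z'(0)=P.$$
   Context: Here $Z(z_1(t))$ denotes $(z_1(z_1(t)),\dots,z_n(z_1(t)))$ and similarly for $Z'(z_1(t))$. *)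

From Stdlib Require Fin.
From Stdlib Require Export Reals Lra.
Open Scope R_scope.

Definition vec (n : nat) := Fin.t n -> R.

Definition vzero {n} : vec n := fun _ => 0.
Definition vadd {n} (x y : vec n) : vec n := fun i => x i + y i.
Definition vsub {n} (x y : vec n) : vec n := fun i => x i - y i.
Definition vscal {n} (c : R) (x : vec n) : vec n := fun i => c * x i.

Definition is_norm {n} (N : vec n -> R) : Prop :=
  (forall x, 0 <= N x) /\
  (forall x, N x = 0 -> x = vzero) /\
  (forall c x, N (vscal c x) = Rabs c * N x) /\
  (forall x y, N (vadd x y) <= N x + N y).

(* Points of R^{4n+1} written (t; z0, z1; x0, x1). *)
Definition pt (n : nat) := (R * vec n * vec n * vec n * vec n)%type.

Definition pdist {n} (N : vec n -> R) (X Y : pt n) : R :=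
  match X, Y with
  | (t, z0, z1, x0, x1), (t', z0', z1', x0', x1') =>
      Rabs (t - t') + N (vsub z0 z0') + N (vsub z1 z1')
      + N (vsub x0 x0') + N (vsub x1 x1')
  end.

Definition is_open {n} (N : vec n -> R) (U : pt n -> Prop) : Prop :=
  forall X, U X -> exists r, 0 < r /\ forall Y, pdist N Y X < r -> U Y.

Definition cont_on {n} (N : vec n -> R) (U : pt n -> Prop)
  (H : R -> vec n -> vec n -> vec n -> vec n -> vec n) : Prop :=
  forall X, U X -> forall eps, 0 < eps -> exists d, 0 < d /\
    forall Y, U Y -> pdist N Y X < d ->
      match X, Y with
      | (t, z0, z1, x0, x1), (t', z0', z1', x0', x1') =>
          N (vsub (H t' z0' z1' x0' x1') (H t z0 z1 x0 x1)) < eps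
      end.

Definition Neps {n} (N : vec n -> R) (eps : R) (P : vec n)
  (t : R) (z0 z1 x0 x1 : vec n) : Prop :=
  Rabs t + N z0 + N z1 + N (vsub x0 P) + N (vsub x1 P) <= eps.

Definition deriv_on (a b : R) (f f' : R -> R) : Prop :=
  forall t, a <= t <= b -> forall eps, 0 < eps -> exists d, 0 < d /\
    forall s, a <= s <= b -> 0 < Rabs (s - t) < d ->
      Rabs ((f s - f t) / (s - t) - f' t) < eps.

Definition cont_interval (a b : R) (f : R -> R) : Prop :=
  forall t, a <= t <= b -> forall eps, 0 < eps -> exists d, 0 < d /\
    forall s, a <= s <= b -> Rabs (s - t) < d -> Rabs (f s - f t) < eps.

(* [Z] is sought as [Z(t) = int_0^t W], where the derivative [W] is a fixed point
   of the map [W |-> H(t; Z(t), Z(z_1(t)); W(t), W(z_1(t)))], [z_1] being the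
   first coordinate of [Z].  On the class of [K]-Lipschitz [W] with [W(0) = P],
   [|w_1| <= 1] and [||W - P|| <= K d], the bound [|w_1| <= 1] makes [z_1]
   1-Lipschitz with [|z_1(t)| <= |t|], so the delayed arguments stay in
   [[-d, d]] and every point stays in [N_eps(P)] once [d] is small.  Conditions
   (i)-(iii) then show that the map preserves the class and contracts the sup
   distance by the factor [C0 + C1 + O(d) < 1]; the Picard iterates converge
   uniformly and their limit is the solution.  Coordinates are compared with the
   given norm through the equivalence of norms on [R^n], proved by the
   sequential compactness argument. *)

From Stdlib Require Import FunctionalExtensionality List ClassicalEpsilon Lia.
From Coquelicot Require Import Coquelicot.
Import ListNotations.

Lemma vec_ext {n} (x y : vec n) : (forall i, x i = y i) -> x = y.
Proof. intros; apply functional_extensionality; auto. Qed.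

(** * Geometric sequences *)

Lemma geometric_small (c q e : R) : 0 <= q < 1 -> 0 < e ->
  exists K, forall k, (K <= k)%nat -> c * q ^ k < e.
Proof.
  intros Hq He; pose proof (Rabs_pos c) as Hc.
  destruct (pow_lt_1_zero q ltac:(rewrite Rabs_right; lra) (e / (Rabs c + 1)))
    as [K HK]; [apply Rdiv_lt_0_compat; lra|].
  exists K; intros k Hk; specialize (HK k Hk).
  rewrite Rabs_right in HK by (apply Rle_ge, pow_le; lra).
  pose proof (pow_le q k ltac:(lra)); pose proof (Rle_abs c).
  apply Rmult_lt_compat_l with (r := Rabs c + 1) in HK; [|lra].
  replace ((Rabs c + 1) * (e / (Rabs c + 1))) with e in HK by (field; lra); nra.
Qed.

Lemma le_0_of_le_geometric (x c q : R) :
  0 <= q < 1 -> (forall k, x <= c * q ^ k) -> x <= 0.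
Proof.
  intros Hq Hx; apply Rnot_lt_le; intros Hx0.
  destruct (geometric_small c q x Hq Hx0) as [K HK].
  specialize (HK K (le_n K)); specialize (Hx K); lra.
Qed.

Lemma pow_le_antimono (q : R) k l : 0 <= q <= 1 -> (k <= l)%nat -> q ^ l <= q ^ k.
Proof.
  intros Hq Hkl; replace l with (k + (l - k))%nat by lia; rewrite pow_add.
  pose proof (pow_le q k ltac:(lra)); pose proof (pow_le q (l - k) ltac:(lra)).
  pose proof (pow_incr q 1 (l - k) ltac:(lra)); rewrite pow1 in *; nra.
Qed.

Lemma cauchy_geometric_limit (u : nat -> R) (c q : R) : 0 <= q < 1 ->
  (forall k l, (k <= l)%nat -> Rabs (u k - u l) <= c * q ^ k) ->
  {l | forall k, Rabs (u k - l) <= c * q ^ k}.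
Proof.
  intros Hq Hu.
  assert (Hcauchy : Cauchy_crit u).
  { intros e He; destruct (geometric_small c q (e / 2) Hq) as [K HK]; [lra|].
    exists K; intros k l Hk Hl; unfold Rdist.
    specialize (HK K (le_n K)); pose proof (Hu K k Hk); pose proof (Hu K l Hl).
    replace (u k - u l) with (- (u K - u k) + (u K - u l)) by ring.
    pose proof (Rabs_triang (- (u K - u k)) (u K - u l)); rewrite Rabs_Ropp in *; lra. }
  destruct (Rcomplete.R_complete u Hcauchy) as [l Hl]; exists l; intros k.
  apply Rnot_lt_le; intros Hk.
  destruct (Hl (Rabs (u k - l) - c * q ^ k)) as [K HK]; [lra|].
  specialize (HK (max k K) (Nat.le_max_r _ _)); unfold Rdist in HK.
  pose proof (Hu k (max k K) (Nat.le_max_l _ _)).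
  pose proof (Rabs_triang (u k - u (max k K)) (u (max k K) - l)).
  replace (u k - u (max k K) + (u (max k K) - l)) with (u k - l) in * by ring; lra.
Qed.

Lemma vec_cauchy_geometric_limit {n} (v : nat -> vec n) (c q : R) : 0 <= q < 1 ->
  (forall k l j, (k <= l)%nat -> Rabs (v k j - v l j) <= c * q ^ k) ->
  {w : vec n | forall k j, Rabs (v k j - w j) <= c * q ^ k}.
Proof.
  intros Hq Hv.
  exists (fun j => proj1_sig (cauchy_geometric_limit (fun k => v k j) c q Hq
                                (fun k l => Hv k l j))).
  intros k j; destruct (cauchy_geometric_limit _ _ _ _ _) as [l Hl]; apply Hl.
Qed.

(** * Equivalence of norms on [R^n] *)

Fixpoint all_fin (n : nat) : list (Fin.t n) :=
  match n with
  | O => []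
  | S k => Fin.F1 :: map Fin.FS (all_fin k)
  end.

Lemma in_all_fin n (i : Fin.t n) : In i (all_fin n).
Proof.
  induction n as [|n IH]; [inversion i|].
  pattern i; apply Fin.caseS'; [left; auto|intros j; right; apply in_map, IH].
Qed.

Definition ebasis {n} (i : Fin.t n) : vec n :=
  fun j => if Fin.eq_dec i j then 1 else 0.

Definition vclear {n} (i : Fin.t n) (x : vec n) : vec n :=
  fun j => if Fin.eq_dec i j then 0 else x j.

Definition supported {n} (l : list (Fin.t n)) (x : vec n) : Prop :=
  forall j, ~ In j l -> x j = 0.

Lemma supported_all_fin {n} (x : vec n) : supported (all_fin n) x.
Proof. intros j Hj; exfalso; apply Hj, in_all_fin. Qed.

Lemma supported_vsub {n} l (x y : vec n) :
  supported l x -> supported l y -> supported l (vsub x y).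
Proof. intros Hx Hy j Hj; unfold vsub; rewrite Hx, Hy; auto; ring. Qed.

Lemma supported_vclear {n} (i : Fin.t n) l x : supported (i :: l) x -> supported l (vclear i x).
Proof.
  intros Hx j Hj; unfold vclear; destruct (Fin.eq_dec i j); auto.
  apply Hx; intros [->|Hin]; auto.
Qed.

Lemma vclear_self {n} (i : Fin.t n) x : vclear i x i = 0.
Proof. unfold vclear; destruct (Fin.eq_dec i i); congruence. Qed.

Lemma vclear_other {n} (i j : Fin.t n) x : i <> j -> vclear i x j = x j.
Proof. unfold vclear; destruct (Fin.eq_dec i j); congruence. Qed.

Lemma vec_basis_vclear {n} (i : Fin.t n) x : x = vadd (vscal (x i) (ebasis i)) (vclear i x).
Proof.
  apply vec_ext; intros j; unfold vadd, vscal, ebasis, vclear.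
  destruct (Fin.eq_dec i j); subst; ring.
Qed.

Section Norm.

Variables (n : nat) (N : vec n -> R).
Hypothesis HN : is_norm N.

Lemma norm_ge0 x : 0 <= N x.
Proof. apply HN. Qed.

Lemma norm_eq0 x : N x = 0 -> x = vzero.
Proof. apply HN. Qed.

Lemma normZ c x : N (vscal c x) = Rabs c * N x.
Proof. apply HN. Qed.

Lemma norm_vadd_le x y : N (vadd x y) <= N x + N y.
Proof. apply HN. Qed.

Lemma norm_vzero : N vzero = 0.
Proof.
  replace vzero with (vscal 0 (@vzero n)) by (apply vec_ext; intros; cbv; ring).
  rewrite normZ, Rabs_R0; ring.
Qed.

Lemma norm_vsubC x y : N (vsub x y) = N (vsub y x).
Proof.
  replace (vsub x y) with (vscal (-1) (vsub y x))
    by (apply vec_ext; intros; unfold vscal, vsub; ring).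
  rewrite normZ, Rabs_left by lra; ring.
Qed.

Lemma norm_vsub_triangle x y z : N (vsub x z) <= N (vsub x y) + N (vsub y z).
Proof.
  replace (vsub x z) with (vadd (vsub x y) (vsub y z))
    by (apply vec_ext; intros; unfold vadd, vsub; ring).
  apply norm_vadd_le.
Qed.

Lemma norm_vsub_le x y : N (vsub x y) <= N x + N y.
Proof.
  replace (vsub x y) with (vadd x (vscal (-1) y))
    by (apply vec_ext; intros; unfold vadd, vscal, vsub; ring).
  eapply Rle_trans; [apply norm_vadd_le|].
  rewrite normZ, Rabs_left by lra; lra.
Qed.

Lemma norm_vsub_diag x : N (vsub x x) = 0.
Proof.
  replace (vsub x x) with (@vzero n) by (apply vec_ext; intros; cbv; ring).
  apply norm_vzero.
Qed.

Lemma eq_of_norm_vsub_le0 x y : N (vsub x y) <= 0 -> x = y.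
Proof.
  intros Hxy; pose proof (norm_ge0 (vsub x y)).
  apply vec_ext; intros i.
  assert (E : vsub x y i = vzero i) by (rewrite (norm_eq0 (vsub x y)); [auto|lra]).
  unfold vsub, vzero in E; lra.
Qed.

Lemma norm_telescope_geometric (v : nat -> vec n) (D q : R) : 0 <= q < 1 ->
  (forall k, N (vsub (v (S k)) (v k)) <= D * q ^ k) ->
  forall k l, (k <= l)%nat -> N (vsub (v k) (v l)) <= D / (1 - q) * q ^ k.
Proof.
  intros Hq Hv k l Hkl; replace l with (k + (l - k))%nat by lia.
  assert (Hsum : forall j, N (vsub (v k) (v (k + j)%nat)) <= D * q ^ k * (1 - q ^ j) / (1 - q)).
  { induction j as [|j IH].
    - rewrite Nat.add_0_r, norm_vsub_diag; simpl; right; field; lra.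
    - eapply Rle_trans; [apply (norm_vsub_triangle _ (v (k + j)%nat))|].
      rewrite (norm_vsubC (v (k + j)%nat)), Nat.add_succ_r.
      pose proof (Hv (k + j)%nat); rewrite pow_add in *.
      replace (D * q ^ k * (1 - q ^ S j) / (1 - q))
        with (D * q ^ k * (1 - q ^ j) / (1 - q) + D * (q ^ k * q ^ j))
        by (simpl; field; lra).
      lra. }
  eapply Rle_trans; [apply Hsum|].
  assert (HD : 0 <= D) by (pose proof (Rle_trans _ _ _ (norm_ge0 _) (Hv O)); simpl in *; lra).
  pose proof (pow_le q (l - k) ltac:(lra)).
  pose proof (Rmult_le_pos _ _ HD (pow_le q k ltac:(lra))).
  replace (D / (1 - q) * q ^ k) with (D * q ^ k * 1 / (1 - q)) by (field; lra).
  unfold Rdiv; apply Rmult_le_compat_r; [left; apply Rinv_0_lt_compat; lra|].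
  nra.
Qed.


Lemma norm_le_coord_bound_supported l : exists B, 0 <= B /\ forall x r,
  supported l x -> (forall j, Rabs (x j) <= r) -> N x <= B * r.
Proof.
  induction l as [|i l [B [HB0 HB]]].
  - exists 0; split; [lra|]; intros x r Hx _.
    replace x with (@vzero n) by (apply vec_ext; intros j; symmetry; apply Hx; auto).
    rewrite norm_vzero; lra.
  - exists (N (ebasis i) + B); split; [pose proof (norm_ge0 (ebasis i)); lra|].
    intros x r Hx Hr; rewrite (vec_basis_vclear i x).
    assert (Hvclear : N (vclear i x) <= B * r).
    { apply HB; [apply supported_vclear; auto|]; intros j.
      destruct (Fin.eq_dec i j) as [<-|Hij].
      + rewrite vclear_self, Rabs_R0; pose proof (Rabs_pos (x i)); pose proof (Hr i); lra.
      + rewrite vclear_other; auto. }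
    eapply Rle_trans; [apply norm_vadd_le|]; rewrite normZ.
    pose proof (Rmult_le_compat_r _ _ _ (norm_ge0 (ebasis i)) (Hr i)); lra.
Qed.

Lemma norm_le_coord_bound : exists B, 0 <= B /\ forall x r,
  (forall j, Rabs (x j) <= r) -> N x <= B * r.
Proof.
  destruct (norm_le_coord_bound_supported (all_fin n)) as [B [HB0 HB]].
  exists B; split; auto; intros x r; apply HB, supported_all_fin.
Qed.

(* The compactness argument of finite dimension, in sequential form: a sequence
   [y_k] in the span of [l] with [ebasis i + y_k -> 0] would converge, by the
   induction hypothesis, to some [w] with [w i = 0] and [ebasis i + w = 0]. *)
Lemma basis_apart_from_supported (B A : R) i l :
  (forall x r, (forall j, Rabs (x j) <= r) -> N x <= B * r) ->
  0 <= A -> (forall x, supported l x -> forall j, Rabs (x j) <= A * N x) ->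
  exists c, 0 < c /\ forall y, supported l y -> y i = 0 -> c <= N (vadd (ebasis i) y).
Proof.
  intros HB HA0 HA; apply NNPP; intros Hno.
  assert (Hy : forall k : nat, exists y,
             (supported l y /\ y i = 0) /\ N (vadd (ebasis i) y) < (/ 2) ^ k).
  { intros k; apply NNPP; intros Hk; apply Hno; exists ((/ 2) ^ k).
    split; [apply pow_lt; lra|]; intros y Hyl Hyi.
    apply Rnot_lt_le; intros Hlt; apply Hk; eauto. }
  apply choice in Hy as [y Hy].
  set (e := ebasis i) in *.
  assert (Hcauchy : forall k l' j, (k <= l')%nat ->
            Rabs (y k j - y l' j) <= 2 * A * (/ 2) ^ k).
  { intros k l' j Hkl.
    destruct (Hy k) as [[Hk _] Hek]; destruct (Hy l') as [[Hl _] Hel].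
    eapply Rle_trans; [apply (HA _ (supported_vsub _ _ _ Hk Hl))|].
    replace (vsub (y k) (y l')) with (vsub (vadd e (y k)) (vadd e (y l')))
      by (apply vec_ext; intros; unfold vsub, vadd; ring).
    pose proof (pow_le_antimono (/ 2) k l' ltac:(lra) Hkl).
    pose proof (norm_vsub_le (vadd e (y k)) (vadd e (y l'))).
    replace (2 * A * (/ 2) ^ k) with (A * (2 * (/ 2) ^ k)) by ring.
    apply Rmult_le_compat_l; lra. }
  destruct (vec_cauchy_geometric_limit y (2 * A) (/ 2) ltac:(lra) Hcauchy) as [w Hw].
  assert (Hwi : w i = 0).
  { assert (Rabs (w i) <= 0).
    2: { pose proof (Rle_abs (w i)); pose proof (Rle_abs (- w i)); rewrite Rabs_Ropp in *; lra. }
    apply (le_0_of_le_geometric _ (2 * A) (/ 2)); [lra|]; intros k.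
    specialize (Hw k i); destruct (Hy k) as [[_ Hyi] _].
    now rewrite Hyi, Rminus_0_l, Rabs_Ropp in Hw. }
  assert (Hew : N (vadd e w) <= 0).
  { apply (le_0_of_le_geometric _ (1 + B * (2 * A)) (/ 2)); [lra|]; intros k.
    replace (vadd e w) with (vadd (vadd e (y k)) (vsub w (y k)))
      by (apply vec_ext; intros; unfold vadd, vsub; ring).
    eapply Rle_trans; [apply norm_vadd_le|].
    assert (N (vsub w (y k)) <= B * (2 * A * (/ 2) ^ k)).
    { apply HB; intros j; unfold vsub; rewrite Rabs_minus_sym; apply Hw. }
    destruct (Hy k) as [_ Hk]; lra. }
  pose proof (norm_eq0 (vadd e w) ltac:(pose proof (norm_ge0 (vadd e w)); lra)) as Hzero.
  apply (f_equal (fun x => x i)) in Hzero.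
  unfold vadd, vzero, e, ebasis in *; rewrite Hwi in *.
  destruct (Fin.eq_dec i i); [lra|congruence].
Qed.

Lemma norm_vclear_le i x : N (vclear i x) <= N x + Rabs (x i) * N (ebasis i).
Proof.
  replace (vclear i x) with (vsub x (vscal (x i) (ebasis i)))
    by (rewrite (vec_basis_vclear i x) at 1; apply vec_ext; intros k;
        unfold vsub, vadd, vscal; ring).
  rewrite <- normZ; apply norm_vsub_le.
Qed.

Lemma coord_le_norm_of_apart c i l : 0 < c ->
  (forall y, supported l y -> y i = 0 -> c <= N (vadd (ebasis i) y)) ->
  forall x, supported (i :: l) x -> Rabs (x i) <= / c * N x.
Proof.
  intros Hc Hsep x Hx; pose proof (Rinv_0_lt_compat c Hc).
  destruct (Req_dec (x i) 0) as [->|Hx0].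
  { rewrite Rabs_R0; pose proof (norm_ge0 x); nra. }
  set (y := vscal (/ x i) (vclear i x)).
  assert (Hxy : x = vscal (x i) (vadd (ebasis i) y)).
  { rewrite (vec_basis_vclear i x) at 1; apply vec_ext; intros j.
    unfold y, vadd, vscal; field; auto. }
  assert (Hy : c <= N (vadd (ebasis i) y)).
  { apply Hsep.
    - intros j Hj; unfold y, vscal; rewrite (supported_vclear i l x Hx j Hj); ring.
    - unfold y, vscal; rewrite vclear_self; ring. }
  rewrite Hxy at 2; rewrite normZ.
  apply Rmult_le_reg_l with c; auto; field_simplify; [|lra].
  pose proof (Rabs_pos (x i)); nra.
Qed.

Lemma coord_le_norm_supported l : exists A, 0 <= A /\ forall x,
  supported l x -> forall j, Rabs (x j) <= A * N x.
Proof.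
  destruct norm_le_coord_bound as [B [_ HB]].
  induction l as [|i l [A' [HA' IH]]].
  - exists 0; split; [lra|]; intros x Hx j; rewrite Hx, Rabs_R0 by auto; lra.
  - destruct (basis_apart_from_supported B A' i l HB HA' IH) as [c [Hc Hsep]].
    pose proof (Rinv_0_lt_compat c Hc) as Hc'.
    set (ne := N (ebasis i)); assert (Hne : 0 <= ne) by apply norm_ge0.
    exists (/ c + A' * (1 + ne / c)).
    assert (HA : 0 <= A' * (1 + ne / c)) by (apply Rmult_le_pos; unfold Rdiv; nra).
    split; [lra|]; intros x Hx j.
    pose proof (norm_ge0 x); pose proof (coord_le_norm_of_apart c i l Hc Hsep x Hx).
    destruct (Fin.eq_dec i j) as [<-|Hij]; [nra|].
    rewrite <- (vclear_other i j x Hij).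
    eapply Rle_trans; [apply IH, supported_vclear, Hx|].
    assert (Hclear : N (vclear i x) <= (1 + ne / c) * N x).
    { eapply Rle_trans; [apply norm_vclear_le|]; fold ne.
      replace ((1 + ne / c) * N x) with (N x + / c * N x * ne) by (field; lra).
      apply Rplus_le_compat_l, Rmult_le_compat_r; auto. }
    pose proof (Rmult_le_compat_l A' _ _ HA' Hclear); nra.
Qed.

Lemma coord_le_norm : exists A, 0 <= A /\ forall x j, Rabs (x j) <= A * N x.
Proof.
  destruct (coord_le_norm_supported (all_fin n)) as [A [HA0 HA]].
  exists A; split; auto; intros x; apply HA, supported_all_fin.
Qed.

End Norm.

(** * Integrals of vector-valued functions *)

Definition ccont {n} (W : R -> vec n) : Prop := forall i x, continuous (fun s => W s i) x.

Definition integ {n} (W : R -> vec n) : R -> vec n :=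
  fun t i => RInt (fun s => W s i) 0 t.

Lemma ex_RInt_cont (f : R -> R) a b : (forall x, continuous f x) -> ex_RInt f a b.
Proof. intros Hf; apply (@ex_RInt_continuous R_CompleteNormedModule); auto. Qed.

Lemma RInt_lipschitz (f : R -> R) c a b : (forall x, continuous f x) ->
  (forall s, Rabs (f s) <= c) -> Rabs (RInt f 0 a - RInt f 0 b) <= c * Rabs (a - b).
Proof.
  intros Hf Hc.
  assert (Hab : RInt f 0 a - RInt f 0 b = RInt f b a).
  { rewrite <- (RInt_Chasles f b 0 a), <- (opp_RInt_swap f 0 b) by (apply ex_RInt_cont; auto).
    change (plus (opp (RInt f 0 b)) (RInt f 0 a)) with (- RInt f 0 b + RInt f 0 a); ring. }
  rewrite Hab; destruct (Rle_dec b a).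
  - rewrite (Rabs_right (a - b)), Rmult_comm by lra.
    apply abs_RInt_le_const; auto; apply ex_RInt_cont; auto.
  - rewrite <- opp_RInt_swap by (apply ex_RInt_cont; auto).
    change (Rabs (- RInt f a b) <= c * Rabs (a - b)).
    rewrite Rabs_Ropp, Rabs_minus_sym, (Rabs_right (b - a)), Rmult_comm by lra.
    apply abs_RInt_le_const; try lra; auto; apply ex_RInt_cont; auto.
Qed.

Lemma integ_0 {n} (W : R -> vec n) : integ W 0 = vzero.
Proof. apply vec_ext; intros i; apply (@RInt_point R_CompleteNormedModule). Qed.

Lemma integ_vsub {n} (W V : R -> vec n) a : ccont W -> ccont V ->
  integ (fun s => vsub (W s) (V s)) a = vsub (integ W a) (integ V a).
Proof.
  intros HW HV; apply vec_ext; intros i.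
  apply (RInt_minus (fun s => W s i) (fun s => V s i)); apply ex_RInt_cont; auto.
Qed.

Lemma ccont_vsub {n} (W V : R -> vec n) :
  ccont W -> ccont V -> ccont (fun s => vsub (W s) (V s)).
Proof.
  intros HW HV i x.
  apply (@continuous_minus R_UniformSpace R_AbsRing R_NormedModule
           (fun s => W s i) (fun s => V s i)); auto.
Qed.

Lemma integ_coord_lipschitz {n} (W : R -> vec n) i c a b : ccont W ->
  (forall s, Rabs (W s i) <= c) -> Rabs (integ W a i - integ W b i) <= c * Rabs (a - b).
Proof. intros HW Hc; apply RInt_lipschitz; auto. Qed.

Lemma integ_deriv_on {n} (W : R -> vec n) i a b : ccont W ->
  deriv_on a b (fun t => integ W t i) (fun t => W t i).
Proof.
  intros HW t _ e He.
  assert (Hder : derivable_pt_lim (fun t => integ W t i) t (W t i)).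
  { apply is_derive_Reals, (is_derive_RInt (fun s => W s i) _ 0 t); auto.
    apply filter_forall; intros u.
    apply (@RInt_correct R_CompleteNormedModule), ex_RInt_cont; auto. }
  destruct (Hder e He) as [del Hdel]; exists del; split; [apply cond_pos|].
  intros s _ [Hs0 Hs]; assert (Hst : s - t <> 0) by (intros E; rewrite E, Rabs_R0 in Hs0; lra).
  specialize (Hdel (s - t) Hst Hs); now replace (t + (s - t)) with s in Hdel by ring.
Qed.

Lemma lipschitz_uniformly_cont (f : R -> R) c :
  (forall t s, Rabs (f t - f s) <= c * Rabs (t - s)) ->
  forall e, 0 < e -> exists d, 0 < d /\ forall t s, Rabs (t - s) < d -> Rabs (f t - f s) < e.
Proof.
  intros Hf e He; exists (e / (Rabs c + 1)); split.
  { apply Rdiv_lt_0_compat; [|pose proof (Rabs_pos c)]; lra. }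
  intros t s Hts; eapply Rle_lt_trans; [apply Hf|].
  pose proof (Rle_abs c); pose proof (Rabs_pos c); pose proof (Rabs_pos (t - s)).
  apply Rmult_lt_compat_l with (r := Rabs c + 1) in Hts; [|lra].
  replace ((Rabs c + 1) * (e / (Rabs c + 1))) with e in Hts by (field; lra); nra.
Qed.

Lemma lipschitz_cont_interval (f : R -> R) c a b :
  (forall t s, Rabs (f t - f s) <= c * Rabs (t - s)) -> cont_interval a b f.
Proof.
  intros Hf t _ e He; destruct (lipschitz_uniformly_cont f c Hf e He) as [d [Hd Hfd]].
  exists d; split; auto.
Qed.

Lemma lipschitz_continuous (f : R -> R) c :
  (forall t s, Rabs (f t - f s) <= c * Rabs (t - s)) -> forall x, continuous f x.
Proof.
  intros Hf x; apply continuity_pt_filterlim; intros e He.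
  destruct (lipschitz_uniformly_cont f c Hf e He) as [d [Hd Hfd]].
  exists d; split; auto; intros y [_ Hy]; apply Hfd, Hy.
Qed.

Section CoordinateBounds.

Variables (n : nat) (N : vec n -> R) (A B : R).
Hypothesis HN : is_norm N.
Hypothesis HA0 : 0 <= A.
Hypothesis coord_le : forall x j, Rabs (x j) <= A * N x.
Hypothesis norm_le : forall x r, (forall j, Rabs (x j) <= r) -> N x <= B * r.

Lemma lipschitz_coord (W : R -> vec n) K :
  (forall t s, N (vsub (W t) (W s)) <= K * Rabs (t - s)) ->
  forall i t s, Rabs (W t i - W s i) <= A * K * Rabs (t - s).
Proof.
  intros HW i t s; rewrite Rmult_assoc.
  eapply Rle_trans; [apply (coord_le (vsub (W t) (W s)) i)|].
  apply Rmult_le_compat_l; auto.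
Qed.

Lemma lipschitz_ccont (W : R -> vec n) K :
  (forall t s, N (vsub (W t) (W s)) <= K * Rabs (t - s)) -> ccont W.
Proof.
  intros HW i; apply (lipschitz_continuous _ (A * K)), lipschitz_coord, HW.
Qed.

Lemma integ_norm_lipschitz (W : R -> vec n) c a b : ccont W -> (forall s, N (W s) <= c) ->
  N (vsub (integ W a) (integ W b)) <= B * A * c * Rabs (a - b).
Proof.
  intros HW Hc; rewrite !Rmult_assoc; apply norm_le; intros j.
  rewrite <- Rmult_assoc; apply integ_coord_lipschitz; auto; intros s.
  eapply Rle_trans; [apply coord_le|]; apply Rmult_le_compat_l; auto.
Qed.

Lemma integ_norm_diff (W V : R -> vec n) c a : ccont W -> ccont V ->
  (forall s, N (vsub (W s) (V s)) <= c) ->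
  N (vsub (integ W a) (integ V a)) <= B * A * c * Rabs a.
Proof.
  intros HW HV Hc; rewrite <- integ_vsub by auto.
  replace (integ _ a) with (vsub (integ (fun s => vsub (W s) (V s)) a)
                                (integ (fun s => vsub (W s) (V s)) 0))
    by (rewrite integ_0; apply vec_ext; intros i; unfold vsub, vzero; ring).
  replace (Rabs a) with (Rabs (a - 0)) by (f_equal; ring).
  apply integ_norm_lipschitz; [apply ccont_vsub|]; auto.
Qed.

Lemma integ_coord_diff (W V : R -> vec n) c a j : ccont W -> ccont V ->
  (forall s, N (vsub (W s) (V s)) <= c) ->
  Rabs (integ W a j - integ V a j) <= A * c * Rabs a.
Proof.
  intros HW HV Hc.
  replace (integ W a j - integ V a j)
    with (integ (fun s => vsub (W s) (V s)) a j - integ (fun s => vsub (W s) (V s)) 0 j)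
    by (rewrite integ_vsub, integ_0 by auto; unfold vsub, vzero; ring).
  replace (Rabs a) with (Rabs (a - 0)) by (f_equal; ring).
  apply integ_coord_lipschitz; [apply ccont_vsub; auto|]; intros s.
  eapply Rle_trans; [apply coord_le|]; apply Rmult_le_compat_l; auto.
Qed.

Lemma norm_geometric_limit (v : nat -> vec n) D q : 0 <= q < 1 ->
  (forall k, N (vsub (v (S k)) (v k)) <= D * q ^ k) ->
  {w : vec n | forall k, N (vsub (v k) w) <= B * A * (D / (1 - q)) * q ^ k}.
Proof.
  intros Hq Hv.
  assert (Hcauchy : forall k l j, (k <= l)%nat ->
            Rabs (v k j - v l j) <= A * (D / (1 - q)) * q ^ k).
  { intros k l j Hkl; eapply Rle_trans; [apply (coord_le (vsub (v k) (v l)))|].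
    rewrite Rmult_assoc; apply Rmult_le_compat_l; auto.
    apply norm_telescope_geometric; auto. }
  destruct (vec_cauchy_geometric_limit v _ q Hq Hcauchy) as [w Hw].
  exists w; intros k; rewrite !Rmult_assoc, <- (Rmult_assoc A); apply norm_le, Hw.
Qed.

End CoordinateBounds.

(** * The Picard iteration *)

Definition clamp (d t : R) : R := Rmax (- d) (Rmin d t).

Lemma clamp_lipschitz d t s : 0 <= d -> Rabs (clamp d t - clamp d s) <= Rabs (t - s).
Proof. intros; unfold clamp, Rmax, Rmin; repeat destruct Rle_dec; split_Rabs; lra. Qed.

Lemma clamp_bound d t : 0 <= d -> Rabs (clamp d t) <= d.
Proof. intros; unfold clamp, Rmax, Rmin; repeat destruct Rle_dec; split_Rabs; lra. Qed.

Lemma clamp_id d t : Rabs t <= d -> clamp d t = t.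
Proof. intros; unfold clamp, Rmax, Rmin; repeat destruct Rle_dec; split_Rabs; lra. Qed.

Lemma exists_small_radius (a b c e f : R) :
  0 <= a -> 0 <= b -> 0 <= c -> 0 < e -> 0 < f ->
  exists d, 0 < d /\ d * a <= 1 /\ d * b <= e /\ d * c < f.
Proof.
  intros Ha Hb Hc He Hf.
  set (G := 1 + a + b / e + c / f).
  assert (Hbe : 0 <= b / e) by (apply Rmult_le_pos; [|left; apply Rinv_0_lt_compat]; lra).
  assert (Hcf : 0 <= c / f) by (apply Rmult_le_pos; [|left; apply Rinv_0_lt_compat]; lra).
  assert (HG : 0 < G) by (unfold G; lra).
  assert (Hi : 0 < / G) by (apply Rinv_0_lt_compat; auto).
  assert (HiG : / G * G = 1) by (field; lra).
  assert (Eb : b = e * (b / e)) by (field; lra).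
  assert (Ec : c = f * (c / f)) by (field; lra).
  exists (/ G); repeat split; auto.
  - rewrite <- HiG; apply Rmult_le_compat_l; [lra|unfold G; lra].
  - rewrite Eb; apply Rle_trans with (e * (/ G * G)); [|rewrite HiG; lra].
    replace (/ G * (e * (b / e))) with (e * (/ G * (b / e))) by ring.
    apply Rmult_le_compat_l, Rmult_le_compat_l; [lra|lra|unfold G; lra].
  - rewrite Ec; apply Rlt_le_trans with (f * (/ G * G)); [|rewrite HiG; lra].
    replace (/ G * (f * (c / f))) with (f * (/ G * (c / f))) by ring.
    apply Rmult_lt_compat_l, Rmult_lt_compat_l; [lra|lra|unfold G; lra].
Qed.

Section Picard.

Variables (m : nat) (N : vec (S m) -> R).
Hypothesis HN : is_norm N.
Variables (A B : R).
Hypothesis HA0 : 0 <= A.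
Hypothesis coord_le : forall x j, Rabs (x j) <= A * N x.
Hypothesis HB0 : 0 <= B.
Hypothesis norm_le : forall x r, (forall j, Rabs (x j) <= r) -> N x <= B * r.

Variable H : R -> vec (S m) -> vec (S m) -> vec (S m) -> vec (S m) -> vec (S m).
Variables (P : vec (S m)) (eps Lam L0 L1 C0 C1 : R).
Hypothesis Heps : 0 < eps.
Hypothesis HP : P = H 0 vzero vzero P P.
Hypothesis HP1 : Rabs (P Fin.F1) <= 1.
Hypothesis HLam : 0 <= Lam.
Hypothesis HL0 : 0 <= L0.
Hypothesis HL1 : 0 <= L1.
Hypothesis HC0 : 0 <= C0.
Hypothesis HC1 : 0 <= C1.
Hypothesis HC : C0 + C1 < 1.
Hypothesis Hi : forall t t' z0 z1 x0 x1,
  Neps N eps P t z0 z1 x0 x1 -> Neps N eps P t' z0 z1 x0 x1 ->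
  N (vsub (H t' z0 z1 x0 x1) (H t z0 z1 x0 x1)) <= Lam * Rabs (t' - t).
Hypothesis Hii : forall t z0 z1 z0' z1' x0 x1,
  Neps N eps P t z0 z1 x0 x1 -> Neps N eps P t z0' z1' x0 x1 ->
  N (vsub (H t z0' z1' x0 x1) (H t z0 z1 x0 x1))
    <= L0 * N (vsub z0' z0) + L1 * N (vsub z1' z1).
Hypothesis Hiii : forall t z0 z1 x0 x1 x0' x1',
  Neps N eps P t z0 z1 x0 x1 -> Neps N eps P t z0 z1 x0' x1' ->
  N (vsub (H t z0 z1 x0' x1') (H t z0 z1 x0 x1))
    <= C0 * N (vsub x0' x0) + C1 * N (vsub x1' x1).
Hypothesis Hiv : forall t z0 z1 x0 x1,
  Neps N eps P t z0 z1 x0 x1 -> Rabs (H t z0 z1 x0 x1 Fin.F1) <= 1.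

Let kap := B * A.
Let M := N P + 1.
Let C := C0 + C1.
(* The Lipschitz constant of [Z'] is the fixed point of
   [K = Lam + L0 kap M + L1 kap M + (C0 + C1) K], the bound obtained from
   (i)-(iii) when [Z'] is [K]-Lipschitz and [z_1] is 1-Lipschitz. *)
Let K := (Lam + (L0 + L1) * (kap * M)) / (1 - C).
Let Q := L0 * kap + L1 * kap + L1 * kap * M * A + C1 * K * A.

Let kap_ge0 : 0 <= kap.
Proof. apply Rmult_le_pos; auto. Qed.

Let M_ge1 : 1 <= M.
Proof. pose proof (norm_ge0 _ N HN P); unfold M; lra. Qed.

Let K_ge0 : 0 <= K.
Proof.
  assert (HkM : 0 <= kap * M) by (apply Rmult_le_pos; [apply kap_ge0|pose proof M_ge1; lra]).
  apply Rmult_le_pos; [|left; apply Rinv_0_lt_compat; unfold C; lra].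
  pose proof (Rmult_le_pos (L0 + L1) (kap * M) ltac:(lra) HkM); lra.
Qed.

Let K_fixed : Lam + (L0 + L1) * (kap * M) + C * K = K.
Proof. unfold K; field; unfold C; lra. Qed.

Let Q_ge0 : 0 <= Q.
Proof.
  pose proof (Rmult_le_pos _ _ HL0 kap_ge0) as H0k.
  pose proof (Rmult_le_pos _ _ HL1 kap_ge0) as H1k.
  pose proof (Rmult_le_pos _ _ (Rmult_le_pos _ _ H1k (Rle_trans _ _ _ Rle_0_1 M_ge1)) HA0).
  pose proof (Rmult_le_pos _ _ (Rmult_le_pos _ _ HC1 K_ge0) HA0).
  unfold Q; lra.
Qed.

Section Radius.

Variable d : R.
Hypothesis d_pos : 0 < d.
Hypothesis Kd_le1 : K * d <= 1.
Hypothesis d_Neps : d * (1 + 2 * kap * M + 2 * K) <= eps.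
Hypothesis d_contr : d * Q < 1 - C.

Let q := C + d * Q.

Let q_range : 0 <= q < 1.
Proof. pose proof (Rmult_le_pos d Q (Rlt_le _ _ d_pos) Q_ge0); unfold q, C in *; lra. Qed.

Record admissible (W : R -> vec (S m)) : Prop := {
  adm_lipschitz : forall t s, N (vsub (W t) (W s)) <= K * Rabs (t - s);
  adm_at_0 : W 0 = P;
  adm_first_coord : forall t, Rabs (W t Fin.F1) <= 1;
  adm_near_P : forall t, N (vsub (W t) P) <= K * d }.

Definition lag (W : R -> vec (S m)) (t : R) : R := integ W t Fin.F1.

Section Admissible.

Variable W : R -> vec (S m).
Hypothesis HW : admissible W.

Lemma adm_ccont : ccont W.
Proof. apply (lipschitz_ccont _ N A HA0 coord_le _ K), adm_lipschitz, HW. Qed.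

Lemma adm_norm_le : forall s, N (W s) <= M.
Proof.
  intros s; replace (W s) with (vadd (vsub (W s) P) P)
    by (apply vec_ext; intros; unfold vadd, vsub; ring).
  eapply Rle_trans; [apply norm_vadd_le; auto|].
  pose proof (adm_near_P _ HW s); unfold M; lra.
Qed.

Lemma adm_integ_lipschitz a b :
  N (vsub (integ W a) (integ W b)) <= kap * M * Rabs (a - b).
Proof. apply (integ_norm_lipschitz _ N A B); auto using adm_ccont, adm_norm_le. Qed.

Lemma adm_integ_small a : Rabs a <= d -> N (integ W a) <= kap * M * d.
Proof.
  intros Ha; pose proof (adm_integ_lipschitz a 0) as Hl.
  rewrite integ_0, Rminus_0_r in Hl.
  replace (vsub (integ W a) vzero) with (integ W a) in Hl
    by (apply vec_ext; intros; unfold vsub, vzero; ring).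
  eapply Rle_trans; [apply Hl|]; apply Rmult_le_compat_l; auto.
  pose proof kap_ge0; pose proof M_ge1; nra.
Qed.

Lemma adm_lag_lipschitz a b : Rabs (lag W a - lag W b) <= Rabs (a - b).
Proof.
  rewrite <- (Rmult_1_l (Rabs (a - b))).
  apply integ_coord_lipschitz; [apply adm_ccont|apply adm_first_coord, HW].
Qed.

Lemma adm_lag_bound a : Rabs (lag W a) <= Rabs a.
Proof.
  pose proof (adm_lag_lipschitz a 0) as Hl.
  unfold lag in *; rewrite integ_0, Rminus_0_r in Hl; unfold vzero in Hl.
  now rewrite Rminus_0_r in Hl.
Qed.

End Admissible.

Lemma Neps_admissible W0 W1 V0 V1 t a b c e :
  admissible W0 -> admissible W1 -> admissible V0 -> admissible V1 ->
  Rabs t <= d -> Rabs a <= d -> Rabs b <= d ->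
  Neps N eps P t (integ W0 a) (integ W1 b) (V0 c) (V1 e).
Proof.
  intros HW0 HW1 HV0 HV1 Ht Ha Hb; unfold Neps.
  pose proof (adm_integ_small _ HW0 a Ha); pose proof (adm_integ_small _ HW1 b Hb).
  pose proof (adm_near_P _ HV0 c); pose proof (adm_near_P _ HV1 e); lra.
Qed.

Lemma adm_lag_le_d W t : admissible W -> Rabs t <= d -> Rabs (lag W t) <= d.
Proof. intros HW Ht; pose proof (adm_lag_bound W HW t); lra. Qed.

Definition rhs (W : R -> vec (S m)) (u : R) : vec (S m) :=
  H u (integ W u) (integ W (lag W u)) (W u) (W (lag W u)).

(* Outside [-d, d] the Picard map is extended by constants, so that the iterates
   are globally Lipschitz functions on [R]. *)
Definition picard (W : R -> vec (S m)) (t : R) : vec (S m) := rhs W (clamp d t).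

Lemma rhs_at_0 W : admissible W -> rhs W 0 = P.
Proof.
  intros HW; unfold rhs, lag; rewrite integ_0; change (vzero Fin.F1) with 0.
  rewrite integ_0, (adm_at_0 _ HW); symmetry; exact HP.
Qed.

Lemma rhs_lipschitz W u v : admissible W -> Rabs u <= d -> Rabs v <= d ->
  N (vsub (rhs W u) (rhs W v)) <= K * Rabs (u - v).
Proof.
  intros HW Hu Hv; unfold rhs.
  set (zu := lag W u); set (zv := lag W v).
  assert (Hzu : Rabs zu <= d) by (apply adm_lag_le_d; auto).
  assert (Hzv : Rabs zv <= d) by (apply adm_lag_le_d; auto).
  assert (Hzz : Rabs (zv - zu) <= Rabs (u - v))
    by (rewrite Rabs_minus_sym; apply adm_lag_lipschitz; auto).
  pose proof kap_ge0 as Hkap; pose proof M_ge1 as HM; pose proof K_ge0 as HK.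
  set (X2 := H v (integ W u) (integ W zu) (W u) (W zu)).
  set (X3 := H v (integ W v) (integ W zv) (W u) (W zu)).
  assert (E1 : N (vsub (H u (integ W u) (integ W zu) (W u) (W zu)) X2)
                <= Lam * Rabs (u - v))
    by (apply Hi; apply Neps_admissible; auto).
  assert (E2 : N (vsub X2 X3) <= (L0 + L1) * (kap * M) * Rabs (u - v)).
  { rewrite norm_vsubC by auto.
    eapply Rle_trans; [apply Hii; apply Neps_admissible; auto|].
    pose proof (adm_integ_lipschitz W HW v u) as G1; rewrite Rabs_minus_sym in G1.
    pose proof (adm_integ_lipschitz W HW zv zu) as G2.
    pose proof (Rmult_le_pos _ _ Hkap (Rle_trans _ _ _ Rle_0_1 HM)) as HkM.
    pose proof (Rmult_le_compat_l (kap * M) _ _ HkM Hzz) as G3.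
    pose proof (Rmult_le_compat_l L0 _ _ HL0 G1).
    pose proof (Rmult_le_compat_l L1 _ _ HL1 (Rle_trans _ _ _ G2 G3)).
    lra. }
  assert (E3 : N (vsub X3 (H v (integ W v) (integ W zv) (W v) (W zv)))
                <= C * K * Rabs (u - v)).
  { rewrite norm_vsubC by auto.
    eapply Rle_trans; [apply Hiii; apply Neps_admissible; auto|].
    pose proof (adm_lipschitz W HW v u) as G1; rewrite Rabs_minus_sym in G1.
    pose proof (adm_lipschitz W HW zv zu) as G2.
    pose proof (Rmult_le_compat_l K _ _ HK Hzz) as G3.
    pose proof (Rmult_le_compat_l C0 _ _ HC0 G1).
    pose proof (Rmult_le_compat_l C1 _ _ HC1 (Rle_trans _ _ _ G2 G3)).
    unfold C; lra. }
  rewrite <- K_fixed; fold zu zv X2.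
  eapply Rle_trans; [apply (norm_vsub_triangle _ N HN _ X2)|].
  eapply Rle_trans; [apply Rplus_le_compat_l, (norm_vsub_triangle _ N HN X2 X3)|].
  lra.
Qed.

Lemma picard_admissible W : admissible W -> admissible (picard W).
Proof.
  intros HW; pose proof (Rlt_le _ _ d_pos) as Hd; pose proof K_ge0 as HK.
  assert (Hc : forall t, Rabs (clamp d t) <= d) by (intros; apply clamp_bound; auto).
  split; unfold picard.
  - intros t s; eapply Rle_trans; [apply rhs_lipschitz; auto|].
    apply Rmult_le_compat_l, clamp_lipschitz; auto.
  - rewrite clamp_id by (rewrite Rabs_R0; lra); apply rhs_at_0, HW.
  - intros t; apply Hiv, Neps_admissible; auto; apply adm_lag_le_d; auto.
  - intros t; rewrite <- (rhs_at_0 W HW).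
    eapply Rle_trans; [apply rhs_lipschitz; auto; rewrite Rabs_R0; lra|].
    rewrite Rminus_0_r; apply Rmult_le_compat_l; auto.
Qed.

Lemma adm_lag_dist W V r u : admissible W -> admissible V ->
  (forall s, N (vsub (V s) (W s)) <= r) -> Rabs u <= d ->
  Rabs (lag V u - lag W u) <= A * r * d.
Proof.
  intros HW HV Hr Hu.
  pose proof (Rle_trans _ _ _ (norm_ge0 _ N HN _) (Hr 0)) as Hr0.
  eapply Rle_trans; [apply (integ_coord_diff _ N A HA0 coord_le); eauto using adm_ccont|].
  apply Rmult_le_compat_l; auto; apply Rmult_le_pos; auto.
Qed.

Lemma adm_integ_dist W V r a : admissible W -> admissible V ->
  (forall s, N (vsub (V s) (W s)) <= r) -> Rabs a <= d ->
  N (vsub (integ V a) (integ W a)) <= kap * r * d.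
Proof.
  intros HW HV Hr Ha.
  pose proof (Rle_trans _ _ _ (norm_ge0 _ N HN _) (Hr 0)) as Hr0.
  eapply Rle_trans;
    [apply (integ_norm_diff _ N A B HA0 coord_le norm_le); eauto using adm_ccont|].
  apply Rmult_le_compat_l; auto; apply Rmult_le_pos; auto; apply kap_ge0.
Qed.

(* The contraction factor [q = C + d Q]: [C] comes from (iii), while the
   dependence through [Z] and the delay [z_1] only costs [O(d)]. *)
Lemma picard_contraction W V r : admissible W -> admissible V ->
  (forall t, N (vsub (W t) (V t)) <= r) ->
  forall t, N (vsub (picard W t) (picard V t)) <= q * r.
Proof.
  intros HW HV Hr t; unfold picard, rhs; set (u := clamp d t).
  pose proof (Rlt_le _ _ d_pos) as Hd.
  pose proof kap_ge0 as Hkap; pose proof M_ge1 as HM; pose proof K_ge0 as HK.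
  assert (Hrsym : forall s, N (vsub (V s) (W s)) <= r)
    by (intros s; rewrite norm_vsubC; auto).
  assert (Hu : Rabs u <= d) by (apply clamp_bound; auto).
  set (zW := lag W u); set (zV := lag V u).
  assert (HzW : Rabs zW <= d) by (apply adm_lag_le_d; auto).
  assert (HzV : Rabs zV <= d) by (apply adm_lag_le_d; auto).
  assert (Hzz : Rabs (zV - zW) <= A * r * d) by (apply (adm_lag_dist W V r); auto).
  set (Y := H u (integ V u) (integ V zV) (W u) (W zW)).
  assert (E1 : N (vsub (H u (integ W u) (integ W zW) (W u) (W zW)) Y)
                 <= L0 * (kap * r * d) + L1 * (kap * r * d + kap * M * (A * r * d))).
  { rewrite norm_vsubC by auto.
    eapply Rle_trans; [apply Hii; apply Neps_admissible; auto|].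
    apply Rplus_le_compat; apply Rmult_le_compat_l; auto; [apply (adm_integ_dist W V r); auto|].
    eapply Rle_trans; [apply (norm_vsub_triangle _ N HN _ (integ W zV))|].
    apply Rplus_le_compat; [apply (adm_integ_dist W V r); auto|].
    eapply Rle_trans; [apply adm_integ_lipschitz; auto|].
    apply Rmult_le_compat_l; auto; apply Rmult_le_pos; lra. }
  assert (E2 : N (vsub Y (H u (integ V u) (integ V zV) (V u) (V zV)))
                 <= C0 * r + C1 * (r + K * (A * r * d))).
  { rewrite norm_vsubC by auto.
    eapply Rle_trans; [apply Hiii; apply Neps_admissible; auto|].
    apply Rplus_le_compat; apply Rmult_le_compat_l; auto.
    eapply Rle_trans; [apply (norm_vsub_triangle _ N HN _ (W zV))|].
    apply Rplus_le_compat; auto.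
    eapply Rle_trans; [apply adm_lipschitz; auto|]; apply Rmult_le_compat_l; auto. }
  eapply Rle_trans; [apply (norm_vsub_triangle _ N HN _ Y)|].
  replace (q * r) with (L0 * (kap * r * d) + L1 * (kap * r * d + kap * M * (A * r * d))
                        + (C0 * r + C1 * (r + K * (A * r * d))))
    by (unfold q, Q, C; ring).
  lra.
Qed.

Definition picard_iter (k : nat) : R -> vec (S m) := Nat.iter k picard (fun _ => P).

Lemma picard_iter_admissible k : admissible (picard_iter k).
Proof.
  induction k as [|k IH]; [|apply picard_admissible, IH].
  pose proof K_ge0 as HK; pose proof (Rlt_le _ _ d_pos) as Hd.
  split; simpl; auto; intros; rewrite (norm_vsub_diag _ N HN).
  - apply Rmult_le_pos; auto; apply Rabs_pos.
  - apply Rmult_le_pos; auto.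
Qed.

Lemma picard_iter_step k t :
  N (vsub (picard_iter (S k) t) (picard_iter k t)) <= K * d * q ^ k.
Proof.
  revert t; induction k as [|k IH]; intros t.
  - rewrite pow_O, Rmult_1_r; apply adm_near_P, picard_iter_admissible.
  - replace (K * d * q ^ S k) with (q * (K * d * q ^ k)) by (simpl; ring).
    apply (picard_contraction (picard_iter (S k)) (picard_iter k));
      auto using picard_iter_admissible.
Qed.

Let E := B * A * (K * d / (1 - q)).

Let E_ge0 : 0 <= E.
Proof.
  pose proof q_range; pose proof (Rmult_le_pos _ _ K_ge0 (Rlt_le _ _ d_pos)).
  apply Rmult_le_pos; [apply kap_ge0|].
  apply Rmult_le_pos; auto; left; apply Rinv_0_lt_compat; lra.
Qed.

Definition picard_limit (t : R) : vec (S m) :=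
  proj1_sig (norm_geometric_limit _ N A B HN HA0 coord_le norm_le
               (fun k => picard_iter k t) (K * d) q q_range
               (fun k => picard_iter_step k t)).

Lemma picard_limit_approx k t : N (vsub (picard_iter k t) (picard_limit t)) <= E * q ^ k.
Proof.
  unfold picard_limit; destruct (norm_geometric_limit _ _ _ _ _ _ _ _ _ _ _ _ _) as [w Hw].
  apply Hw.
Qed.

Lemma picard_limit_approx' k t : N (vsub (picard_limit t) (picard_iter k t)) <= E * q ^ k.
Proof. rewrite norm_vsubC by auto; apply picard_limit_approx. Qed.

Lemma picard_limit_admissible : admissible picard_limit.
Proof.
  pose proof q_range as Hq.
  split.
  - intros t s.
    assert (N (vsub (picard_limit t) (picard_limit s)) - K * Rabs (t - s) <= 0); [|lra].
    apply (le_0_of_le_geometric _ (2 * E) q Hq); intros k.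
    pose proof (norm_vsub_triangle _ N HN (picard_limit t) (picard_iter k t) (picard_limit s)).
    pose proof (norm_vsub_triangle _ N HN (picard_iter k t) (picard_iter k s) (picard_limit s)).
    pose proof (adm_lipschitz _ (picard_iter_admissible k) t s).
    pose proof (picard_limit_approx' k t); pose proof (picard_limit_approx k s); lra.
  - symmetry; apply (eq_of_norm_vsub_le0 _ N HN), (le_0_of_le_geometric _ E q Hq); intros k.
    rewrite <- (adm_at_0 _ (picard_iter_admissible k)); apply picard_limit_approx.
  - intros t; assert (Rabs (picard_limit t Fin.F1) - 1 <= 0); [|lra].
    apply (le_0_of_le_geometric _ (A * E) q Hq); intros k.
    pose proof (adm_first_coord _ (picard_iter_admissible k) t).
    pose proof (Rabs_triang_inv (picard_limit t Fin.F1) (picard_iter k t Fin.F1)).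
    pose proof (coord_le (vsub (picard_limit t) (picard_iter k t)) Fin.F1).
    pose proof (Rmult_le_compat_l A _ _ HA0 (picard_limit_approx' k t)).
    unfold vsub in *; lra.
  - intros t; assert (N (vsub (picard_limit t) P) - K * d <= 0); [|lra].
    apply (le_0_of_le_geometric _ E q Hq); intros k.
    pose proof (norm_vsub_triangle _ N HN (picard_limit t) (picard_iter k t) P).
    pose proof (adm_near_P _ (picard_iter_admissible k) t).
    pose proof (picard_limit_approx' k t); lra.
Qed.

Lemma picard_limit_fixed t : picard picard_limit t = picard_limit t.
Proof.
  pose proof q_range as Hq.
  apply (eq_of_norm_vsub_le0 _ N HN), (le_0_of_le_geometric _ (2 * E) q Hq); intros k.
  pose proof (norm_vsub_triangle _ N HN (picard picard_limit t) (picard_iter (S k) t)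
                (picard_limit t)).
  pose proof (picard_contraction _ _ _ picard_limit_admissible (picard_iter_admissible k)
                (fun s => picard_limit_approx' k s) t).
  pose proof (picard_limit_approx (S k) t); simpl pow in *.
  pose proof (Rmult_le_pos _ _ E_ge0 (pow_le q k (proj1 Hq))).
  change (picard_iter (S k)) with (picard (picard_iter k)) in *.
  nra.
Qed.

Theorem picard_solution : exists Z Z' : R -> vec (S m),
  (forall i, deriv_on (- d) d (fun t => Z t i) (fun t => Z' t i)) /\
  (forall i, cont_interval (- d) d (fun t => Z' t i)) /\
  (forall t, Rabs t <= d ->
     Rabs (Z t Fin.F1) <= Rabs t /\
     Neps N eps P t (Z t) (Z (Z t Fin.F1)) (Z' t) (Z' (Z t Fin.F1)) /\
     Z' t = H t (Z t) (Z (Z t Fin.F1)) (Z' t) (Z' (Z t Fin.F1))) /\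
  Z 0 = vzero /\ Z' 0 = P.
Proof.
  pose proof picard_limit_admissible as HW.
  exists (integ picard_limit), picard_limit; split; [|split; [|split; [|split]]].
  - intros i; apply integ_deriv_on, adm_ccont, HW.
  - intros i; apply (lipschitz_cont_interval _ (A * K)).
    apply (lipschitz_coord _ N A HA0 coord_le), adm_lipschitz, HW.
  - intros t Ht; split; [|split].
    + apply adm_lag_bound, HW.
    + apply Neps_admissible; auto; apply adm_lag_le_d; auto.
    + rewrite <- (picard_limit_fixed t) at 1; unfold picard.
      now rewrite clamp_id.
  - apply integ_0.
  - apply adm_at_0, HW.
Qed.

End Radius.

Theorem exists_local_solution : exists (delta : R) (Z Z' : R -> vec (S m)),
  0 < delta /\
  (forall i, deriv_on (- delta) delta (fun t => Z t i) (fun t => Z' t i)) /\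
  (forall i, cont_interval (- delta) delta (fun t => Z' t i)) /\
  (forall t, Rabs t <= delta ->
     Rabs (Z t Fin.F1) <= Rabs t /\
     Neps N eps P t (Z t) (Z (Z t Fin.F1)) (Z' t) (Z' (Z t Fin.F1)) /\
     Z' t = H t (Z t) (Z (Z t Fin.F1)) (Z' t) (Z' (Z t Fin.F1))) /\
  Z 0 = vzero /\ Z' 0 = P.
Proof.
  assert (Hb : 0 <= 1 + 2 * kap * M + 2 * K).
  { pose proof (Rmult_le_pos _ _ kap_ge0 (Rle_trans _ _ _ Rle_0_1 M_ge1)); pose proof K_ge0; lra. }
  destruct (exists_small_radius K _ Q eps (1 - C) K_ge0 Hb Q_ge0 Heps ltac:(unfold C; lra))
    as (d & Hd & HKd & Hde & HdQ).
  rewrite Rmult_comm in HKd.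
  destruct (picard_solution d) as (Z & Z' & HZ); auto.
  exists d, Z, Z'; auto.
Qed.

End Picard.

Theorem theorem4p1 (m : nat)
  (N : vec (S m) -> R) (HN : is_norm N)
  (U : pt (S m) -> Prop) (HU : is_open N U)
  (H : R -> vec (S m) -> vec (S m) -> vec (S m) -> vec (S m) -> vec (S m))
  (Hcont : cont_on N U H)
  (P : vec (S m))
  (HP : P = H 0 vzero vzero P P)
  (HP1 : Rabs (P Fin.F1) <= 1)
  (eps : R) (Heps : 0 < eps)
  (Hdom : forall t z0 z1 x0 x1, Neps N eps P t z0 z1 x0 x1 -> U (t, z0, z1, x0, x1))
  (Lam : R) (HLam : 0 < Lam)
  (Hi : forall t t' z0 z1 x0 x1,
      Neps N eps P t z0 z1 x0 x1 -> Neps N eps P t' z0 z1 x0 x1 ->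
      N (vsub (H t' z0 z1 x0 x1) (H t z0 z1 x0 x1)) <= Lam * Rabs (t' - t))
  (L0 L1 : R) (HL0 : 0 < L0) (HL1 : 0 < L1)
  (Hii : forall t z0 z1 z0' z1' x0 x1,
      Neps N eps P t z0 z1 x0 x1 -> Neps N eps P t z0' z1' x0 x1 ->
      N (vsub (H t z0' z1' x0 x1) (H t z0 z1 x0 x1))
        <= L0 * N (vsub z0' z0) + L1 * N (vsub z1' z1))
  (C0 C1 : R) (HC0 : 0 <= C0) (HC1 : 0 <= C1) (HC : C0 + C1 < 1)
  (Hiii : forall t z0 z1 x0 x1 x0' x1',
      Neps N eps P t z0 z1 x0 x1 -> Neps N eps P t z0 z1 x0' x1' ->
      N (vsub (H t z0 z1 x0' x1') (H t z0 z1 x0 x1))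
        <= C0 * N (vsub x0' x0) + C1 * N (vsub x1' x1))
  (Hiv : forall t z0 z1 x0 x1,
      Neps N eps P t z0 z1 x0 x1 -> Rabs (H t z0 z1 x0 x1 Fin.F1) <= 1) :
  exists (delta : R) (Z Z' : R -> vec (S m)),
    0 < delta /\
    (forall i, deriv_on (- delta) delta (fun t => Z t i) (fun t => Z' t i)) /\
    (forall i, cont_interval (- delta) delta (fun t => Z' t i)) /\
    (forall t, Rabs t <= delta ->
       Rabs (Z t Fin.F1) <= Rabs t /\
       Neps N eps P t (Z t) (Z (Z t Fin.F1)) (Z' t) (Z' (Z t Fin.F1)) /\
       Z' t = H t (Z t) (Z (Z t Fin.F1)) (Z' t) (Z' (Z t Fin.F1))) /\
    Z 0 = vzero /\ Z' 0 = P.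
Proof.
  destruct (coord_le_norm _ N HN) as (A & HA0 & HA).
  destruct (norm_le_coord_bound _ N HN) as (B & HB0 & HB).
  apply (exists_local_solution m N HN A B HA0 HA HB0 HB H P eps Lam L0 L1 C0 C1); auto; lra.
Qed.
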